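(* Let $X$ be an upper-bound unital commutative semiring. The following are equivalent: (1) $\mathcal{S}(X)$ is fully elementary; (2) $\mathcal{S}(X)$ is Frobenius; (3) $X=\{0\}$.
   Context: A semiring $(X,+,0,\cdot)$: $(X,+,0)$ commutative monoid, $(X,\cdot)$ semigroup, distributivity, $0$ absorbing. Intrinsic order: $a\le b$ iff $a+x=b$ for some $x$; upper-bound means this preorder is antisymmetric. $\mathcal{S}(X)=X\times X$ with $(a',a'')+(b',b'')=(a'+b',a''+b'')$, $(a',a'')\cdot(b',b'')=(a'b'+a''b'',a'b''+a''b')$; it is a unital commutative semiring with zero $(0,0)$ and unit $(1,0)$. A unital commutative semiring $Y$ is Frobenius if $(x+y)^n=x^n+y^n$ for all $x,y\in Y$, $n\ge1$. Polynomials over $Y$ in $n$ variables are functions $Y^n\to Y$ represented by formal expressions $\sum_k a_k\prod_j x_j^{d_{k,j}}$; symmetric if represented by an expression closed (with coefficients) under permuting variables. $e_j$ is the sum of all products of $j$ distinct variables. $Y$ is fully elementary if for every $n$ every symmetric polynomial in $n$ variables equals $r(e_1,\dots,e_n)$ as functions on $Y^n$ for some polynomial $r$. *)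

From HB Require Import structures.
From mathcomp Require Import all_boot all_order all_algebra all_fingroup.
Set Implicit Arguments. Unset Strict Implicit. Unset Printing Implicit Defensive.
Import GRing.Theory.
Local Open Scope ring_scope.

(* Semirings are MathComp [comPzSemiRingType]s (commutative, unital, 0 absorbing,
   possibly trivial 0 = 1). *)

Definition intrinsic_le (X : comPzSemiRingType) (a b : X) : Prop :=
  exists x : X, a + x = b.

Definition upper_bound (X : comPzSemiRingType) : Prop :=
  forall a b : X, intrinsic_le a b -> intrinsic_le b a -> a = b.

Definition SX (X : comPzSemiRingType) : Type := (X * X)%type.

Section SXdef.
Variable X : comPzSemiRingType.

HB.instance Definition _ := GRing.Nmodule.copy (SX X) (X * X)%type.

Definition SX_one : SX X := (1, 0).
Definition SX_mul (a b : SX X) : SX X :=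
  (a.1 * b.1 + a.2 * b.2, a.1 * b.2 + a.2 * b.1).

Lemma SX_addE (a b : SX X) : a + b = (a.1 + b.1, a.2 + b.2).
Proof. by case: a; case: b. Qed.

Lemma SX_zeroE : (0 : SX X) = (0, 0).
Proof. by []. Qed.

Lemma SX_mulA : associative SX_mul.
Proof.
move=> [a1 a2] [b1 b2] [c1 c2]; rewrite /SX_mul /=. congr pair;
  symmetry; rewrite !mulrDl !mulrDr !mulrA addrACA; congr (_ + _); exact: addrC.
Qed.

Lemma SX_mulC : commutative SX_mul.
Proof.
move=> [a1 a2] [b1 b2]; rewrite /SX_mul /=; congr pair;
  by rewrite ?[a1 * _]mulrC ?[a2 * _]mulrC // addrC.
Qed.

Lemma SX_mul1r : left_id SX_one SX_mul.
Proof. by move=> [a1 a2]; rewrite /SX_mul /= !mul1r !mul0r ?addr0 ?add0r. Qed.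

Lemma SX_mulDl : left_distributive SX_mul +%R.
Proof.
move=> [a1 a2] [b1 b2] [c1 c2]; rewrite /SX_mul !SX_addE /=; congr pair;
  rewrite !mulrDl -!addrA; congr (_ + _); rewrite addrC -!addrA; congr (_ + _);
  by rewrite addrC.
Qed.

Lemma SX_mul0r : left_zero (0 : SX X) SX_mul.
Proof. by move=> [a1 a2]; rewrite /SX_mul /= !mul0r addr0. Qed.

HB.instance Definition _ := GRing.Nmodule_isComPzSemiRing.Build (SX X)
  SX_mulA SX_mulC SX_mul1r SX_mulDl SX_mul0r.

End SXdef.

Definition Frobenius (Y : comPzSemiRingType) : Prop :=
  forall (x y : Y) (n : nat), (1 <= n)%N -> (x + y) ^+ n = x ^+ n + y ^+ n.

(* Formal polynomials in n variables over Y: a formal expression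
   sum_d c(d) prod_j x_j^(d j), where the exponent vectors d range over
   {ffun 'I_n -> 'I_D} for some degree bound D, with coefficients c d.  *)
Definition poly_eval (Y : comPzSemiRingType) (n D : nat)
  (c : {ffun 'I_n -> 'I_D} -> Y) (x : 'I_n -> Y) : Y :=
  \sum_(d : {ffun 'I_n -> 'I_D}) c d * \prod_(j < n) x j ^+ d j.

Definition sym_coefs (Y : comPzSemiRingType) (n D : nat)
  (c : {ffun 'I_n -> 'I_D} -> Y) : Prop :=
  forall (s : 'S_n) (d : {ffun 'I_n -> 'I_D}), c [ffun j => d (s j)] = c d.

Definition elem_sym (Y : comPzSemiRingType) (n k : nat) (x : 'I_n -> Y) : Y :=
  \sum_(S : {set 'I_n} | #|S| == k) \prod_(i in S) x i.

(* Fully elementary: every symmetric polynomial p in n variables coincides,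
   as a function on Y^n, with r(e_1, ..., e_n) for some polynomial r. *)
Definition fully_elementary (Y : comPzSemiRingType) : Prop :=
  forall (n D : nat) (c : {ffun 'I_n -> 'I_D} -> Y), sym_coefs c ->
    exists (D' : nat) (c' : {ffun 'I_n -> 'I_D'} -> Y),
      forall x : 'I_n -> Y,
        poly_eval c x = poly_eval c' (fun i : 'I_n => elem_sym i.+1 x).

From HB Require Import structures.
From mathcomp Require Import all_boot all_order all_algebra all_fingroup.
Set Implicit Arguments. Unset Strict Implicit. Unset Printing Implicit Defensive.
Import GRing.Theory.
Local Open Scope ring_scope.

(* In S(X) put u = (1,1) and t = (0,1), so that u = 1 + t and t^2 = 1.  Since
   u * w has equal components for every w, while X has no nonzero sums
   equal to 0, the second component of (1 + t)^2 = u^2 = (2,2) cannot match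
   that of 1 + t^2 = (2,0) unless 1 + 1 = 0, which forces X = 0.  For full
   elementarity take p(x,y) = (1 + x^2)(1 + y^2) and a representation
   p = r(x + y, xy).  The vanishing second component of p(1,t) = r(u,t) kills
   every coefficient of r in front of a pure nonconstant power of e_1, hence
   p(u,0) = r(u,0) = r(0,0) = p(0,0), and comparing second components gives
   1 + 1 = 0 again. *)

Section UpperBound.
Variables (X : comPzSemiRingType) (hX : upper_bound X).

Lemma upper_bound_addr_eq0 (a b : X) : a + b = 0 -> a = 0.
Proof. by move=> ab0; apply: hX; [exists b | exists a; rewrite add0r]. Qed.

Lemma upper_bound_sum_eq0 (I : finType) (F : I -> X) :
  \sum_i F i = 0 -> forall i, F i = 0.
Proof. by move=> F0 i; move: F0; rewrite (bigD1 i) //=; apply: upper_bound_addr_eq0. Qed.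

Lemma upper_bound_trivial_of_2_eq0 : 1 + 1 = 0 :> X -> forall x : X, x = 0.
Proof.
by move=> /upper_bound_addr_eq0 one0 x; rewrite -(mulr1 x) one0 mulr0.
Qed.

End UpperBound.

Section SymmetricPolynomials.
Variable Y : comPzSemiRingType.

Lemma elem_sym1 n (x : 'I_n -> Y) : elem_sym 1 x = \sum_i x i.
Proof.
rewrite /elem_sym (eq_bigl (mem [set [set i] | i : 'I_n])); last first.
  by move=> S /=; apply/cards1P/imsetP => [[i ->]|[i _ ->]]; exists i.
rewrite big_imset /=; last by move=> i j _ _; apply: set1_inj.
by apply: eq_bigr => i _; rewrite big_set1.
Qed.

Lemma elem_symT n (x : 'I_n -> Y) : elem_sym n x = \prod_i x i.
Proof.
rewrite /elem_sym (eq_bigl (pred1 setT)); last first.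
  move=> S /=; apply/eqP/eqP => [cardS|->]; last by rewrite cardsT card_ord.
  by apply/eqP; rewrite eqEcard subsetT cardsT card_ord cardS leqnn.
by rewrite big_pred1_eq; apply: eq_bigl => i; rewrite in_setT.
Qed.

Lemma sym_coefs_prod n D (g : 'I_D -> Y) :
  sym_coefs (fun d : {ffun 'I_n -> 'I_D} => \prod_j g (d j)).
Proof.
move=> s d; rewrite [RHS](reindex_inj (@perm_inj _ s)) /=.
by apply: eq_bigr => j _; rewrite ffunE.
Qed.

Lemma poly_eval_prod_coefs n D (g : 'I_D -> Y) (x : 'I_n -> Y) :
  poly_eval (fun d : {ffun 'I_n -> 'I_D} => \prod_j g (d j)) x =
  \prod_j \sum_(k < D) g k * x j ^+ k.
Proof.
by rewrite bigA_distr_bigA; apply: eq_bigr => d _; rewrite -big_split.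
Qed.

Lemma poly_eval_elem_sym2 D (c : {ffun 'I_2 -> 'I_D} -> Y) (a b : Y) :
  poly_eval c (fun i => elem_sym i.+1 (tnth [tuple a; b])) =
  poly_eval c (tnth [tuple a + b; a * b]).
Proof.
apply: eq_bigr => d _; congr (_ * _); apply: eq_bigr => -[[|[|//]]] i2 _ /=.
  by rewrite elem_sym1 !big_ord_recl big_ord0 addr0.
by rewrite elem_symT !big_ord_recl big_ord0 mulr1.
Qed.

Lemma poly_eval2E D (c : {ffun 'I_2 -> 'I_D} -> Y) (a b : Y) :
  poly_eval c (tnth [tuple a; b]) =
  \sum_d c d * (a ^+ d ord0 * b ^+ d (lift ord0 ord0)).
Proof.
by apply: eq_bigr => d _; rewrite !big_ord_recl big_ord0 mulr1 !(tnth_nth 0).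
Qed.

End SymmetricPolynomials.

Section SX.
Variable X : comPzSemiRingType.

Lemma SX_mulE (a b : SX X) : a * b = (a.1 * b.1 + a.2 * b.2, a.1 * b.2 + a.2 * b.1).
Proof. by []. Qed.

Lemma SX_snd_sum (I : finType) (F : I -> SX X) : (\sum_i F i).2 = \sum_i (F i).2.
Proof. by apply: (big_morph snd) => // a b; rewrite SX_addE. Qed.

Lemma SX_diag_mul (a : X) (w : SX X) :
  (((a, a) : SX X) * w).1 = (((a, a) : SX X) * w).2.
Proof. by rewrite SX_mulE /= addrC. Qed.

Lemma SX_all_eq : (forall x : X, x = 0) -> forall a b : SX X, a = b.
Proof. by move=> X0 [a1 a2] [b1 b2]; rewrite (X0 a1) (X0 a2) (X0 b1) (X0 b2). Qed.

End SX.

Section TrivialityOfX.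
Variables (X : comPzSemiRingType) (hX : upper_bound X).

Let u : SX X := (1, 1).
Let t : SX X := (0, 1).

Lemma Frobenius_SX_trivial : Frobenius (SX X) -> forall x : X, x = 0.
Proof.
move=> frob; apply: (upper_bound_trivial_of_2_eq0 hX).
move: (frob 1 t 2%N isT) => /(congr1 snd).
by rewrite !expr2 !SX_mulE /= !(mul0r, mulr0, add0r, addr0, mul1r, mulr1).
Qed.

Lemma SX_poly_eval_u0_eq_00 D (c : {ffun 'I_2 -> 'I_D} -> SX X) :
  (poly_eval c (tnth [tuple u; t])).2 = 0 ->
  poly_eval c (tnth [tuple u; 0]) = poly_eval c (tnth [tuple 0; 0]).
Proof.
rewrite !poly_eval2E SX_snd_sum => /(upper_bound_sum_eq0 hX) snd0.
apply: eq_bigr => d _.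
case: (nat_of_ord (d (lift ord0 ord0))) (snd0 d) => [|k]; last first.
  by move=> _; rewrite exprS mul0r !mulr0.
rewrite !expr0 !mulr1.
case: (nat_of_ord (d ord0)) => [//|k] term2.
rewrite [in RHS]exprS mul0r mulr0.
have term1 : (c d * u ^+ k.+1).1 = (c d * u ^+ k.+1).2.
  by rewrite exprS mulrCA SX_diag_mul.
by move: term1 term2; case: (c d * _) => z1 z2 /= -> ->.
Qed.

Lemma fully_elementary_SX_trivial : fully_elementary (SX X) -> forall x : X, x = 0.
Proof.
move=> fe; apply: (upper_bound_trivial_of_2_eq0 hX).
(* the coefficients of (1 + x^2) (1 + y^2) *)
pose g (k : 'I_3) : SX X := if odd k then 0 else 1.
have [D [r p_r]] := fe 2%N 3%N _ (sym_coefs_prod g).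
have p_eval (a b : SX X) :
    poly_eval r (tnth [tuple a + b; a * b]) = (1 + a ^+ 2) * (1 + b ^+ 2).
  rewrite -poly_eval_elem_sym2 -p_r poly_eval_prod_coefs.
  by rewrite !big_ord_recl !big_ord0 /g !(tnth_nth 0) /= !mulr1 !mul0r !add0r !addr0 !mul1r.
have ut : (poly_eval r (tnth [tuple u; t])).2 = 0.
  have -> : u = 1 + t by rewrite SX_addE /= addr0 add0r.
  rewrite -[t in [tuple _; t]]mul1r p_eval.
  by rewrite !expr2 !SX_mulE /= !(mulr0, mul0r, addr0).
have pu0 := p_eval u 0; rewrite addr0 mulr0 in pu0.
have p00 := p_eval 0 0; rewrite addr0 mulr0 in p00.
move: (SX_poly_eval_u0_eq_00 ut); rewrite pu0 p00 => /(congr1 snd).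
by rewrite !expr2 !SX_mulE /= !(mul0r, mulr0, add0r, addr0, mul1r, mulr1).
Qed.

End TrivialityOfX.

Theorem proposition6p1 (X : comPzSemiRingType) (hX : upper_bound X) :
  (fully_elementary (SX X) <-> Frobenius (SX X)) /\
  (Frobenius (SX X) <-> (forall x : X, x = 0)).
Proof.
have trivial_fe : (forall x : X, x = 0) -> fully_elementary (SX X).
  move=> X0 n D c _; exists 0%N, (fun _ => 0) => x; exact: SX_all_eq.
have trivial_frob : (forall x : X, x = 0) -> Frobenius (SX X).
  by move=> X0 x y n _; apply: SX_all_eq.
split; split.
- by move=> /(fully_elementary_SX_trivial hX) /trivial_frob.
- by move=> /(Frobenius_SX_trivial hX) /trivial_fe.
- exact: Frobenius_SX_trivial.
- exact: trivial_frob.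
Qed.
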